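(* Let $Q\ge1$, $0<s<Q$, let $(X,d_X,\mu)$ be a proper, locally $Q$-homogeneous metric measure space supporting a local $Q$-Poincaré inequality, and let $\pi\colon X\to W$ be a locally David–Semmes $s$-regular map onto a proper metric space $W$. Let $Y$ be a metric space, $p>Q$, $f\colon X\to Y$ continuous with an upper gradient in $L^p_{\mathrm{loc}}(X)$, and $\alpha\in(s,\frac{ps}{p-Q+s}]$. Then for every compact $K\subseteq X$, the set $$E_\alpha=\{a\in W:\mathcal{H}^\alpha(f(\pi^{-1}(a)\cap K))>0\}$$ is a countable union of compact sets.
   Context: Metric measure space: metric space with Borel measure positive and finite on nonempty open sets; proper: closed balls compact. Locally $Q$-homogeneous: for every compact $K$ there are $R>0$, $C\ge1$ with $\mu(B(x,r_2))/r_2^Q\le C\mu(B(x,r_1))/r_1^Q$ for $x\in K$, $0<r_1\le r_2<R$. Upper gradient of continuous $f$: Borel $g\ge0$ with $d_Y(f(\gamma(0)),f(\gamma(1)))\le\int_\gamma g\,ds$ for all rectifiable $\gamma$. Local $Q$-Poincaré inequality: for each compact $K$ there are $C,\sigma\ge1$, $R>0$ such that for every continuous $u\colon X\to\mathbb{R}$ with upper gradient $g$ and every ball $B$ centered in $K$ of radius $<R$, $\frac{1}{\mu(B)}\int_B|u-u_B|d\mu\le C\operatorname{diam}B(\frac{1}{\mu(\sigma B)}\int_{\sigma B}g^Q d\mu)^{1/Q}$. A surjection $\pi\colon X\to W$ between proper metric spaces is locally David–Semmes $s$-regular if for every compact $K\subseteq X$, $\pi|_K$ is Lipschitz and there are $C\ge1$,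 $r_0>0$ such that for every ball $B\subseteq W$ of radius $r<r_0$, $\pi^{-1}(B)\cap K$ can be covered by at most $Cr^{-s}$ balls in $X$ of radius $Cr$. *)

From HB Require Import structures.
From mathcomp Require Import all_boot all_order all_algebra.
From mathcomp Require Import all_classical all_reals all_analysis measurable_realfun.
Set Implicit Arguments. Unset Strict Implicit. Unset Printing Implicit Defensive.
Import Order.TTheory GRing.Theory Num.Theory.
Local Open Scope classical_set_scope.
Local Open Scope ring_scope.

Section MetricDefs.
Variable R : realType.

Definition is_metric (T : Type) (d : T -> T -> R) : Prop :=
  [/\ forall x y, 0 <= d x y,
      forall x y, d x y = 0 <-> x = y,
      forall x y, d x y = d y x &
      forall x y z, d x z <= d x y + d y z].

Definition oball (T : Type) (d : T -> T -> R) (x : T) (r : R) : set T :=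
  [set y | d x y < r].
Definition cball (T : Type) (d : T -> T -> R) (x : T) (r : R) : set T :=
  [set y | d x y <= r].

Definition mopen (T : Type) (d : T -> T -> R) (A : set T) : Prop :=
  forall x, A x -> exists2 r : R, 0 < r & oball d x r `<=` A.

Definition mcompact (T : Type) (d : T -> T -> R) (K : set T) : Prop :=
  forall (I : Type) (U : I -> set T), (forall i, mopen d (U i)) ->
    K `<=` \bigcup_i U i ->
    exists2 D : set I, finite_set D & K `<=` \bigcup_(i in D) U i.

Definition proper_metric (T : Type) (d : T -> T -> R) : Prop :=
  is_metric d /\ forall x r, mcompact d (cball d x r).

Definition mcontinuous (T U : Type) (dT : T -> T -> R) (dU : U -> U -> R)
  (f : T -> U) : Prop :=
  forall x (e : R), 0 < e -> exists2 del : R, 0 < del &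
    forall y, dT x y < del -> dU (f x) (f y) < e.

(** Diameter (with the convention diam set0 = 0). *)
Definition mdiam (T : Type) (d : T -> T -> R) (A : set T) : \bar R :=
  ereal_sup ([set 0%E] `|` [set (d x y)%:E | x in A & y in A]).

Definition hausdorff_content (T : Type) (d : T -> T -> R) (a delta : R)
  (A : set T) : \bar R :=
  ereal_inf [set (\sum_(0 <= i <oo) poweR (mdiam d (U i)) a)%E |
              U in [set U : nat -> set T |
                     A `<=` \bigcup_i U i /\ forall i, (mdiam d (U i) <= delta%:E)%E]].

Definition hausdorff_measure (T : Type) (d : T -> T -> R) (a : R) (A : set T)
  : \bar R :=
  ereal_sup [set hausdorff_content d a delta A | delta in [set delta : R | 0 < delta]].

Definition curve_length (T : Type) (d : T -> T -> R) (gamma : R -> T) (a b : R)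
  : \bar R :=
  ereal_sup [set v | exists (n : nat) (t : nat -> R),
      [/\ t 0%N = a, t n = b, (forall i, (i < n)%N -> t i <= t i.+1) &
           v = (\sum_(i < n) (d (gamma (t i)) (gamma (t i.+1)))%:E)%E]].

Definition arclength_curve (T : Type) (d : T -> T -> R) (gamma : R -> T) (l : R)
  : Prop :=
  0 <= l /\ forall a b, 0 <= a -> a <= b -> b <= l ->
    curve_length d gamma a b = (b - a)%:E.

Definition line_integral (T : Type) (gamma : R -> T) (l : R) (g : T -> \bar R)
  : \bar R :=
  (\int[lebesgue_measure]_(t in `[0%R, l]%classic) g (gamma t))%E.

End MetricDefs.

Section MeasDefs.
Variable R : realType.

Definition borel_structure (d0 : measure_display) (X : measurableType d0)
  (dX : X -> X -> R) : Prop :=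
  (@measurable d0 X) = <<s [set A | mopen dX A] >>.

(** Upper gradient (g >= 0 Borel; tested on all rectifiable curves, via their
    arc-length parametrizations, which is how the line integral is defined). *)
Definition upper_gradient (d0 : measure_display) (X : measurableType d0)
  (dX : X -> X -> R) (U : Type) (dU : U -> U -> R) (f : X -> U) (g : X -> \bar R)
  : Prop :=
  [/\ forall x, (0 <= g x)%E, measurable_fun setT g &
      forall (gamma : R -> X) (l : R), arclength_curve dX gamma l ->
        ((dU (f (gamma 0)) (f (gamma l)))%:E <= line_integral gamma l g)%E].

Definition rdist (a b : R) : R := `|a - b|.

Definition ball_mean (d0 : measure_display) (X : measurableType d0)
  (mu : {measure set X -> \bar R}) (B : set X) (h : X -> \bar R) : \bar R :=
  ((fine (mu B))^-1)%:E * (\int[mu]_(x in B) h x)%E.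

Definition locally_homogeneous (d0 : measure_display) (X : measurableType d0)
  (dX : X -> X -> R) (mu : {measure set X -> \bar R}) (Q : R) : Prop :=
  forall K, mcompact dX K -> exists Rr : R, exists C : R,
    [/\ 0 < Rr, 1 <= C &
      forall x r1 r2, K x -> 0 < r1 -> r1 <= r2 -> r2 < Rr ->
        (mu (oball dX x r2) * (powR r2 (- Q))%:E <=
         C%:E * (mu (oball dX x r1) * (powR r1 (- Q))%:E))%E].

Definition local_poincare (d0 : measure_display) (X : measurableType d0)
  (dX : X -> X -> R) (mu : {measure set X -> \bar R}) (Q : R) : Prop :=
  forall K, mcompact dX K -> exists C : R, exists sigma : R, exists Rr : R,
    [/\ 1 <= C, 1 <= sigma, 0 < Rr &
      forall (u : X -> R) (g : X -> \bar R) (x : X) (r : R),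
        mcontinuous dX rdist u -> upper_gradient dX rdist u g ->
        K x -> 0 < r -> r < Rr ->
        let B := oball dX x r in
        let uB := fine (ball_mean mu B (fun y => (u y)%:E)) in
        (ball_mean mu B (fun y => `|u y - uB|%:E) <=
         C%:E * mdiam dX B *
         poweR (ball_mean mu (oball dX x (sigma * r)) (fun y => poweR (g y) Q))
               Q^-1)%E].

Definition Lp_loc (d0 : measure_display) (X : measurableType d0)
  (dX : X -> X -> R) (mu : {measure set X -> \bar R}) (p : R) (g : X -> \bar R)
  : Prop :=
  forall K, mcompact dX K -> (\int[mu]_(x in K) poweR (g x) p < +oo)%E.

Definition locally_DS_regular (X W : Type) (dX : X -> X -> R) (dW : W -> W -> R)
  (pi : X -> W) (s : R) : Prop :=
  (forall w, exists x, pi x = w) /\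
  forall K, mcompact dX K ->
    (exists L : R, forall x y, K x -> K y -> dW (pi x) (pi y) <= L * dX x y) /\
    exists C : R, exists r0 : R, [/\ 1 <= C, 0 < r0 &
      forall (w : W) (r : R), 0 < r -> r < r0 ->
        exists (N : nat) (c : nat -> X),
          (N%:R <= C * powR r (- s)) /\
          pi @^-1` (oball dW w r) `&` K `<=`
            \bigcup_(i in [set i | (i < N)%N]) oball dX (c i) (C * r)].

End MeasDefs.

From HB Require Import structures.
From mathcomp Require Import all_boot all_order all_algebra.
From mathcomp Require Import all_classical all_reals all_analysis measurable_realfun.
From mathcomp Require Import lra.
Set Implicit Arguments. Unset Strict Implicit. Unset Printing Implicit Defensive.
Import Order.TTheory GRing.Theory Num.Theory.
Local Open Scope classical_set_scope.
Local Open Scope ring_scope.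

(* Only the continuity of f, the Lipschitz continuity of pi on compacta and
   alpha > 0 matter.  Write F a for the image under f of the fibre of a in K.
   Then E_alpha = \bigcup_n {a | H^alpha_1(F a) >= 1/(n+1)}, because H^alpha
   and its size-1 content H^alpha_1 vanish on the same sets.  Each such
   superlevel set lies in the compact set pi(K), and it is closed: if
   H^alpha_1(F w) < c, some open O contains F w with H^alpha_1(B) < c for all
   B inside O (thicken each set of a nearly optimal cover by a small amount),
   and pi({x in K | f x \notin O}) is a compact set missing w, off which
   F a lies in O. *)

Section MetricFacts.
Variables (R : realType) (T : Type) (d : T -> T -> R).
Hypothesis d_metric : is_metric d.

Lemma dist_ge0 x y : 0 <= d x y. Proof. by case: d_metric. Qed.
Lemma distC x y : d x y = d y x. Proof. by case: d_metric. Qed.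
Lemma dist_triangle x y z : d x z <= d x y + d y z. Proof. by case: d_metric. Qed.
Lemma dist_xx x : d x x = 0. Proof. by case: d_metric => _ /(_ x x) [_ ->]. Qed.
Lemma dist_eq0 x y : d x y = 0 -> x = y. Proof. by case: d_metric => _ /(_ x y) []. Qed.

Lemma finite_nat_ub (D : set nat) : finite_set D -> exists N, forall i, D i -> (i <= N)%N.
Proof.
move=> fD; exists (\max_(i <- finmap.enum_fset (fset_set D)) i)%N => i Di.
by apply: (@leq_bigmax_seq _ _ xpredT id) => //; rewrite in_fset_set //; exact/mem_set.
Qed.

Lemma mcompact_closed A : mcompact d A -> mopen d (~` A).
Proof.
move=> cA w nAw.
pose U (n : nat) := [set y | (n.+1%:R)^-1 < d w y].
have U_open n : mopen d (U n).
  move=> y; rewrite /U /=; set e := _^-1 => Uy.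
  exists (d w y - e); first by rewrite subr_gt0.
  move=> z; rewrite /oball /= => yz; have := dist_triangle w z y.
  by rewrite (distC z y); lra.
have AU : A `<=` \bigcup_n U n.
  move=> y Ay; have wy : 0 < d w y.
    by rewrite lt_neqAle dist_ge0 andbT eq_sym; apply/eqP => /dist_eq0 wy; subst y.
  have /archi_boundP : 0 <= (d w y)^-1 by rewrite invr_ge0 ltW.
  set k := Num.Def.archi_bound _ => ltk.
  exists k => //; rewrite /U /= -[ltRHS]invrK ltf_pV2 ?posrE ?invr_gt0 ?ltr0n //.
  by apply: lt_trans ltk _; rewrite ltr_nat.
have [D /finite_nat_ub [N DN] AD] := cA _ _ U_open AU.
exists (N.+1%:R)^-1; first by rewrite invr_gt0 ltr0n.
move=> y wy Ay; have [i Di] := AD _ Ay; rewrite /U /= => Uy.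
have Ni : (N.+1%:R)^-1 <= (i.+1%:R)^-1 :> R.
  by rewrite lef_pV2 ?posrE ?ltr0n // ler_nat; exact: DN.
by have := lt_trans (le_lt_trans Ni Uy) wy; rewrite ltxx.
Qed.

Lemma mcompact_closed_subset A B :
  mcompact d A -> mopen d (~` B) -> B `<=` A -> mcompact d B.
Proof.
move=> cA oB BA I U U_open BU.
have [[b Bb]|B0] := pselect (B !=set0); last first.
  by exists set0 => // b Bb; case: B0; exists b.
have [i0 _ _] := BU _ Bb.
have UB_open i : mopen d (U i `|` ~` B).
  move=> y [Uy|nBy].
    by have [r r0 yr] := U_open i y Uy; exists r => // z /yr; left.
  by have [r r0 yr] := oB y nBy; exists r => // z /yr; right.
have AUB : A `<=` \bigcup_i (U i `|` ~` B).
  move=> a Aa; have [Ba|nBa] := pselect (B a); last by exists i0 => //; right.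
  by have [j _ Uj] := BU _ Ba; exists j => //; left.
have [D fD AD] := cA _ _ UB_open AUB.
by exists D => // x Bx; have [j Dj [Uj|//]] := AD _ (BA _ Bx); exists j.
Qed.

Definition mnbhd (A : set T) (r : R) : set T := [set y | exists2 u, A u & d u y < r].

Lemma mnbhd_open A r : mopen d (mnbhd A r).
Proof.
move=> y [u Au uy]; exists (r - d u y); first by rewrite subr_gt0.
move=> z; rewrite /oball /= => yz; exists u => //; have := dist_triangle u y z; lra.
Qed.

Lemma sub_mnbhd A r : 0 < r -> A `<=` mnbhd A r.
Proof. by move=> r0 x Ax; exists x; rewrite ?dist_xx. Qed.

End MetricFacts.

Section Image.
Variables (R : realType) (T U : Type) (dT : T -> T -> R) (dU : U -> U -> R).
Hypothesis dT_metric : is_metric dT.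

Definition mcontinuous_on (A : set T) (phi : T -> U) : Prop :=
  forall x (e : R), A x -> 0 < e -> exists2 del : R, 0 < del &
    forall y, A y -> dT x y < del -> dU (phi x) (phi y) < e.

Lemma lipschitz_mcontinuous_on (K A : set T) (phi : T -> U) (L : R) :
  A `<=` K -> (forall x y, K x -> K y -> dU (phi x) (phi y) <= L * dT x y) ->
  mcontinuous_on A phi.
Proof.
move=> AK phiL x e Ax e0; pose L' := Num.max L 1.
have L'0 : 0 < L' by rewrite lt_max ltr01 orbT.
exists (e / L'); first by rewrite divr_gt0.
move=> y Ay xy; apply: le_lt_trans (phiL _ _ (AK _ Ax) (AK _ Ay)) _.
apply: (@le_lt_trans _ _ (L' * dT x y)); last by rewrite mulrC -ltr_pdivlMr.
by apply: ler_wpM2r; [exact: dist_ge0 | rewrite le_max lexx].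
Qed.

Lemma mcompact_image (A : set T) (phi : T -> U) :
  mcompact dT A -> mcontinuous_on A phi -> mcompact dU (phi @` A).
Proof.
move=> cA phi_cont I W W_open AW.
pose V i := [set x | exists2 r : R, 0 < r & forall y, A y -> dT x y < r -> W i (phi y)].
have V_open i : mopen dT (V i).
  move=> x [r r0 xr]; exists r => // y; rewrite /oball /= => xy.
  exists (r - dT x y); first by rewrite subr_gt0.
  by move=> z Az yz; apply: xr => //; have := dist_triangle dT_metric x y z; lra.
have AV : A `<=` \bigcup_i V i.
  move=> x Ax; have [i _ Wi] := AW _ (ex_intro2 _ _ x Ax erefl).
  have [e e0 eW] := W_open i _ Wi; have [del del0 xdel] := phi_cont x e Ax e0.
  by exists i => //; exists del => // y Ay /(xdel _ Ay) /eW.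
have [D fD AD] := cA _ _ V_open AV.
exists D => // _ [x Ax <-]; have [i Di [r r0 xr]] := AD _ Ax.
by exists i => //; apply: xr; rewrite ?dist_xx.
Qed.

End Image.

Section Diameter.
Variables (R : realType) (T : Type) (d : T -> T -> R).
Local Open Scope ereal_scope.

Lemma mdiam_ge0 A : 0 <= mdiam d A.
Proof. by apply: ereal_sup_ubound; left. Qed.

Lemma mdiam_ub A x y : A x -> A y -> (d x y)%:E <= mdiam d A.
Proof. by move=> Ax Ay; apply: ereal_sup_ubound; right; exists x => //; exists y. Qed.

Lemma mdiam_le A (D : R) : (0 <= D)%R -> (forall x y, A x -> A y -> (d x y <= D)%R) ->
  mdiam d A <= D%:E.
Proof.
move=> D0 AD; apply: ge_ereal_sup => _ [->|[x Ax [y Ay <-]]]; rewrite lee_fin //.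
exact: AD.
Qed.

Lemma mdiam_set0 : mdiam d set0 = 0.
Proof. by apply/eqP; rewrite eq_le mdiam_ge0 andbT; apply: mdiam_le => // x y []. Qed.

Lemma mdiam_mnbhd A (D r : R) : is_metric d -> (0 <= D)%R -> (0 <= r)%R ->
  mdiam d A <= D%:E -> mdiam d (mnbhd d A r) <= (D + 2 * r)%:E.
Proof.
move=> d_metric D0 r0 AD; apply: mdiam_le; first lra.
move=> y y' [u Au uy] [u' Au' uy'].
have uu' : (d u u' <= D)%R by rewrite -lee_fin (le_trans (mdiam_ub Au Au')).
have := dist_triangle d_metric y u y'; have := dist_triangle d_metric u u' y'.
by rewrite (distC d_metric y u); lra.
Qed.

End Diameter.

Section Powers.
Variables (R : realType) (alpha : R).
Hypothesis alpha_gt0 : (0 < alpha)%R.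
Local Open Scope ereal_scope.

Lemma poweR_le_EFin (x : \bar R) (y : R) :
  0 <= x -> x <= y%:E -> poweR x alpha <= (powR y alpha)%:E.
Proof.
case: x => [r| |] //; rewrite !lee_fin => r0 ry.
by rewrite ge0_ler_powR // ?ltW // nnegrE (le_trans r0 ry).
Qed.

Lemma EFin_le_poweR (x : \bar R) (y : R) :
  (0 <= y)%R -> y%:E <= x -> (powR y alpha)%:E <= poweR x alpha.
Proof.
case: x => [r| |] // y0; rewrite ?lee_fin => yr.
  by rewrite ge0_ler_powR // ?ltW // nnegrE (le_trans y0 yr).
by rewrite poweRyr ?leey // gt_eqF.
Qed.

Lemma poweR_lt1 (x : \bar R) : poweR x alpha < 1 -> x < 1.
Proof.
rewrite !ltNge; apply: contra => x1.
by have := EFin_le_poweR ler01 x1; rewrite powR1.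
Qed.

(* Enlarging t by eta costs a factor mu > 1 and an additive e > 0 in t^alpha:
   take eta so that t + eta <= mu^(1/alpha) * max(t, e^(1/alpha)). *)
Lemma powR_pad (mu t e b : R) : (1 < mu)%R -> (0 <= t)%R -> (t < b)%R -> (0 < e)%R ->
  exists eta : R, [/\ (0 < eta)%R, (t + eta <= b)%R &
    (powR (t + eta) alpha <= mu * (powR t alpha + e))%R].
Proof.
move=> mu1 t0 tb e0.
have inv_powR x : (0 <= x)%R -> powR (powR x alpha^-1) alpha = x.
  by move=> x0; rewrite -powRrM mulVf ?gt_eqF // powRr1.
pose lam := powR mu alpha^-1; pose m := Num.max t (powR e alpha^-1).
have lamE : powR lam alpha = mu by rewrite inv_powR // ltW // (lt_trans ltr01).
have lam1 : (1 < lam)%R.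
  rewrite ltNge; apply/negP => lam_le1.
  have := ge0_ler_powR (ltW alpha_gt0) (powR_ge0 _ _) ler01 lam_le1.
  by rewrite lamE powR1; lra.
have m0 : (0 < m)%R by rewrite lt_max powR_gt0 // orbT.
have tm : (t <= m)%R by rewrite le_max lexx.
have m_lam : (m < lam * m)%R by rewrite -[ltLHS]mul1r ltr_pM2r.
have mE : (powR m alpha <= powR t alpha + e)%R.
  rewrite /m; have [_|_] := leP t (powR e alpha^-1); last by rewrite lerDl ltW.
  by rewrite inv_powR ?lerDr ?powR_ge0 // ltW.
exists (Num.min (lam * m - t) (b - t))%R; split.
- by rewrite lt_min !subr_gt0 tb (le_lt_trans tm m_lam).
- by rewrite -lerBrDl ge_min lexx orbT.
apply: (@le_trans _ _ (powR (lam * m) alpha)%R).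
  apply: ge0_ler_powR; rewrite ?nnegrE ?(ltW alpha_gt0) //.
  - by rewrite addr_ge0 // le_min !subr_ge0 (ltW tb) (le_trans tm (ltW m_lam)).
  - by rewrite mulr_ge0 // ltW // (lt_trans ltr01).
  - by rewrite -lerBrDl ge_min lexx.
by rewrite powRM ?powR_ge0 ?(ltW m0) // lamE ler_pM2l; lra.
Qed.

End Powers.

Section ExtendedReals.
Variable R : realType.
Local Open Scope ereal_scope.

Lemma nneseries_ge_term (u : nat -> \bar R) i :
  (forall n, 0 <= u n) -> u i <= \sum_(0 <= n <oo) u n.
Proof.
move=> u0; apply: le_trans (nneseries_lim_ge i.+1 (fun n _ _ => u0 n)).
by rewrite big_nat_recr //= leeDr // sume_ge0.
Qed.

Lemma nneseries_pad_lt (a : nat -> \bar R) (c : R) :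
  (forall i, 0 <= a i) -> \sum_(0 <= i <oo) a i < c%:E ->
  exists mu : R, exists e : nat -> R, [/\ (1 < mu)%R, forall i, (0 < e i)%R &
    \sum_(0 <= i <oo) (mu%:E * (a i + (e i)%:E)) < c%:E].
Proof.
move=> a0 Sc; set S := \sum_(0 <= i <oo) a i in Sc.
have S0 : 0 <= S by apply: nneseries_ge0 => n _ _.
have Sfin : S \is a fin_num by rewrite ge0_fin_numE // (lt_trans Sc (ltry _)).
pose s := fine S; have Se : S = s%:E by rewrite fineK.
have s0 : (0 <= s)%R by rewrite -lee_fin -Se.
have sc : (s < c)%R by rewrite -lte_fin -Se.
pose beta := ((c - s) / 4)%R; pose mu := ((s + 2 * beta) / (s + beta))%R.
have beta0 : (0 < beta)%R by rewrite /beta; lra.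
have sbeta0 : (0 < s + beta)%R by lra.
have mu1 : (1 < mu)%R by rewrite /mu ltr_pdivlMr //; lra.
exists mu, (fun i => beta / (2 ^ i.+1)%:R)%R; split => // [i|].
  by rewrite divr_gt0 // ltr0n expn_gt0.
rewrite nneseriesZl; last by move=> n _; rewrite adde_ge0 // lee_fin divr_ge0 // ltW.
apply: (@le_lt_trans _ _ (mu%:E * (S + beta%:E))).
  apply: lee_wpmul2l; first by rewrite lee_fin ltW // (lt_trans ltr01).
  exact/epsilon_trick/ltW.
by rewrite Se -EFinD -EFinM lte_fin /mu mulfVK ?gt_eqF // /beta; lra.
Qed.

Lemma setgt0_bigcup_ge_invn (T : Type) (h : T -> \bar R) :
  [set a | 0 < h a] = \bigcup_n [set a | ((n.+1%:R)^-1)%:E <= h a].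
Proof.
apply/seteqP; split => a /=; last first.
  by move=> [n _]; apply: lt_le_trans; rewrite lte_fin invr_gt0 ltr0n.
case E : (h a) => [r| |] // r0; last by exists 0%N => //=; rewrite E leey.
have /archi_boundP : (0 <= r^-1)%R by rewrite invr_ge0 ltW.
set k := Num.Def.archi_bound _ => ltk.
exists k => //=; rewrite E lee_fin -[leRHS]invrK lef_pV2 ?posrE ?invr_gt0 ?ltr0n //.
by apply: ltW; apply: lt_trans ltk _; rewrite ltr_nat.
Qed.

End ExtendedReals.

Section HausdorffContent.
Variables (R : realType) (T : Type) (d : T -> T -> R) (alpha : R).
Hypothesis d_metric : is_metric d.
Hypothesis alpha_gt0 : (0 < alpha)%R.
Local Open Scope ereal_scope.

Local Notation H1 := (hausdorff_content d alpha 1).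

Lemma hausdorff_content_ge0 delta A : 0 <= hausdorff_content d alpha delta A.
Proof.
apply: le_ereal_inf_tmp => _ [U _ <-].
by apply: nneseries_ge0 => n _ _; exact: poweR_ge0.
Qed.

Lemma hausdorff_content_le_cover delta A (U : nat -> set T) :
  A `<=` \bigcup_i U i -> (forall i, mdiam d (U i) <= delta%:E) ->
  hausdorff_content d alpha delta A <= \sum_(0 <= i <oo) poweR (mdiam d (U i)) alpha.
Proof. by move=> AU Udelta; apply: ereal_inf_lbound; exists U. Qed.

Lemma hausdorff_content_set0 delta :
  (0 <= delta)%R -> hausdorff_content d alpha delta set0 = 0.
Proof.
move=> delta0; apply/eqP; rewrite eq_le hausdorff_content_ge0 andbT.
apply: le_trans (@hausdorff_content_le_cover delta set0 (fun=> set0) _ _) _ => //.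
  by move=> i; rewrite mdiam_set0 lee_fin.
by rewrite eseries0 // => i _ _; rewrite mdiam_set0 poweR0r // gt_eqF.
Qed.

(* If H1 A is small, no set in a cover realizing it can have large diameter,
   so the same cover bounds every H^alpha_delta A. *)
Lemma hausdorff_measure_gt0 A : 0 < hausdorff_measure d alpha A <-> 0 < H1 A.
Proof.
split; last first.
  by move=> /lt_le_trans; apply; apply: ereal_sup_ubound; exists 1%R => /=.
apply: contraPP => /negP; rewrite -leNgt => H1A; apply/negP; rewrite -leNgt.
apply: ge_ereal_sup => _ [delta /= delta0 <-].
apply/lee_addgt0Pr => e e0; rewrite add0e.
pose t := Num.min e (powR delta alpha).
have t0 : (0 < t)%R by rewrite lt_min e0 powR_gt0.
have /ereal_inf_lt [_ [U [AU _] <-] Ut] : H1 A < t%:E by apply: le_lt_trans H1A _.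
have U0 n : 0 <= poweR (mdiam d (U n)) alpha by exact: poweR_ge0.
have Udelta i : mdiam d (U i) <= delta%:E.
  rewrite leNgt; apply/negP => /ltW /(EFin_le_poweR alpha_gt0 (ltW delta0)) Ui.
  have := le_lt_trans (le_trans Ui (nneseries_ge_term i U0)) Ut.
  by rewrite lte_fin lt_min ltxx andbF.
apply: le_trans (hausdorff_content_le_cover AU Udelta) _.
by apply/ltW/(lt_le_trans Ut); rewrite lee_fin ge_min lexx.
Qed.

(* Thicken the sets of a cover with sum below c; the extra diameter is paid
   for by the slack of nneseries_pad_lt. *)
Lemma hausdorff_content1_open_nbhd A (c : R) : (c <= 1)%R -> H1 A < c%:E ->
  exists O : set T, [/\ mopen d O, A `<=` O & forall B, B `<=` O -> H1 B < c%:E].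
Proof.
move=> c1 /ereal_inf_lt [_ [U [AU _] <-] Uc].
pose a i := poweR (mdiam d (U i)) alpha.
have a0 i : 0 <= a i by exact: poweR_ge0.
have [mu [e [mu1 e0 sum_lt]]] := nneseries_pad_lt a0 Uc.
have U1 i : mdiam d (U i) < 1.
  apply: (poweR_lt1 alpha_gt0); apply: le_lt_trans (nneseries_ge_term i a0) _.
  by apply: lt_le_trans Uc _; rewrite lee_fin.
pose D i := fine (mdiam d (U i)).
have DE i : mdiam d (U i) = (D i)%:E.
  by rewrite fineK // ge0_fin_numE ?mdiam_ge0 // (lt_trans (U1 i) (ltry _)).
have D0 i : (0 <= D i)%R by rewrite -lee_fin -DE mdiam_ge0.
have D1 i : (D i < 1)%R by rewrite -lte_fin -DE.
have /choice [eta eta_pad] i : exists eta : R, [/\ (0 < eta)%R, (D i + eta <= 1)%R &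
    (powR (D i + eta) alpha <= mu * (powR (D i) alpha + e i))%R].
  exact: powR_pad.
pose V i := mnbhd d (U i) (eta i / 2).
have V_diam i : mdiam d (V i) <= (D i + eta i)%:E.
  have [eta0 _ _] := eta_pad i.
  have -> : (D i + eta i = D i + 2 * (eta i / 2))%R by rewrite mulrC divfK.
  by apply: mdiam_mnbhd; rewrite ?DE // divr_ge0 // ltW.
exists (\bigcup_i V i); split.
- by move=> y [i _ /(mnbhd_open d_metric) [r r0 yr]]; exists r => // z /yr Vz; exists i.
- move=> x /AU [i _ Ux]; have [eta0 _ _] := eta_pad i.
  by exists i => //; apply: (sub_mnbhd d_metric) Ux; rewrite divr_gt0.
move=> B BV; apply: le_lt_trans sum_lt.
apply: le_trans (@hausdorff_content_le_cover 1%R B V BV _) _.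
  by move=> i; have [_ Deta1 _] := eta_pad i; apply: le_trans (V_diam i) _; rewrite lee_fin.
apply: lee_nneseries => [n _ _|i _]; first exact: poweR_ge0.
have [_ _ Deta] := eta_pad i.
apply: le_trans (poweR_le_EFin alpha_gt0 (mdiam_ge0 _ _) (V_diam i)) _.
by rewrite /a DE poweR_EFin -EFinD -EFinM lee_fin.
Qed.

End HausdorffContent.

Section FibreSuperlevel.
Variables (R : realType) (X W Y : Type).
Variables (dX : X -> X -> R) (dW : W -> W -> R) (dY : Y -> Y -> R).
Variables (pi : X -> W) (f : X -> Y) (alpha L : R) (K : set X).
Hypotheses (dX_metric : is_metric dX) (dW_metric : is_metric dW).
Hypotheses (dY_metric : is_metric dY) (alpha_gt0 : (0 < alpha)%R).
Hypotheses (K_compact : mcompact dX K) (f_cont : mcontinuous dX dY f).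
Hypothesis pi_lip : forall x y, K x -> K y -> (dW (pi x) (pi y) <= L * dX x y)%R.
Local Open Scope ereal_scope.

Local Notation F a := (f @` (pi @^-1` [set a] `&` K)).
Local Notation H1 := (hausdorff_content dY alpha 1).

Lemma mcompact_pi_image A : A `<=` K -> mcompact dX A -> mcompact dW (pi @` A).
Proof.
move=> AK cA.
exact (mcompact_image dX_metric cA (lipschitz_mcontinuous_on dX_metric AK pi_lip)).
Qed.

(* F a stays inside V as long as a avoids the compact set pi(K \ f^-1(V)). *)
Lemma fibre_superlevel_closed (c : R) : (c <= 1)%R ->
  mopen dW (~` [set a | c%:E <= H1 (F a)]).
Proof.
move=> c1 w /negP; rewrite -ltNge => Fw_c.
have [V [V_open FwV V_small]] :=
  hausdorff_content1_open_nbhd dY_metric alpha_gt0 c1 Fw_c.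
pose G := [set x | K x /\ ~ V (f x)].
have G_closed : mopen dX (~` G).
  move=> x nGx; have [Kx|nKx] := pselect (K x).
    have Vfx : V (f x) by apply: contrapT => nV; apply: nGx.
    have [eps eps0 epsV] := V_open _ Vfx; have [del del0 xdel] := f_cont x eps0.
    by exists del => // y /xdel /epsV Vfy [].
  have [r r0 xr] := mcompact_closed dX_metric K_compact nKx.
  by exists r => // y /xr Ky [].
have piG_compact : mcompact dW (pi @` G).
  apply: mcompact_pi_image => [x []//|].
  exact (mcompact_closed_subset K_compact G_closed (fun _ Gx => proj1 Gx)).
have w_piG : ~ (pi @` G) w.
  by move=> [x [Kx nVfx] pxw]; apply: nVfx; apply: FwV; exists x.
have [r r0 wr] := mcompact_closed dW_metric piG_compact w_piG.
exists r => // a /wr a_piG; apply/negP; rewrite -ltNge; apply: V_small.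
by move=> _ [x [pxa Kx] <-]; apply: contrapT => nVfx; apply: a_piG; exists x.
Qed.

Lemma fibre_superlevel_sub (c : R) : (0 < c)%R ->
  [set a | c%:E <= H1 (F a)] `<=` pi @` K.
Proof.
move=> c0 a; apply: contraPP => a_piK; apply/negP; rewrite -ltNge.
have -> : F a = set0 by apply/seteqP; split => // y [x [pxa Kx] _]; apply: a_piK; exists x.
by rewrite hausdorff_content_set0.
Qed.

Lemma fibre_superlevel_compact (c : R) : (0 < c)%R -> (c <= 1)%R ->
  mcompact dW [set a | c%:E <= H1 (F a)].
Proof.
move=> c0 c1.
exact (mcompact_closed_subset (mcompact_pi_image (@subset_refl _ K) K_compact)
  (fibre_superlevel_closed c1) (fibre_superlevel_sub c0)).
Qed.

End FibreSuperlevel.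

Theorem lemma5p1 (R : realType) (Q s p alpha : R)
  (d0 : measure_display) (X : measurableType d0) (dX : X -> X -> R)
  (mu : {measure set X -> \bar R})
  (W : Type) (dW : W -> W -> R) (pi : X -> W)
  (Y : Type) (dY : Y -> Y -> R) (f : X -> Y) (g : X -> \bar R) :
  1 <= Q -> 0 < s -> s < Q ->
  proper_metric dX -> borel_structure dX ->
  (forall A, mopen dX A -> A !=set0 -> (0 < mu A)%E) ->
  (forall x r, (mu (oball dX x r) < +oo)%E) ->
  locally_homogeneous dX mu Q -> local_poincare dX mu Q ->
  proper_metric dW -> locally_DS_regular dX dW pi s ->
  is_metric dY -> Q < p ->
  mcontinuous dX dY f -> upper_gradient dX dY f g -> Lp_loc dX mu p g ->
  s < alpha -> alpha <= p * s / (p - Q + s) ->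
  forall K, mcompact dX K ->
    exists C : nat -> set W, (forall n, mcompact dW (C n)) /\
      [set a | (0 < hausdorff_measure dY alpha (f @` (pi @^-1` [set a] `&` K)))%E]
        = \bigcup_n C n.
Proof.
move=> _ s_gt0 _ [dX_metric _] _ _ _ _ _ [dW_metric _] [_ pi_DS] dY_metric _ f_cont
  _ _ s_alpha _ K K_compact.
have alpha_gt0 : 0 < alpha by apply: lt_trans s_alpha.
have [[L pi_lip] _] := pi_DS K K_compact.
pose h a := hausdorff_content dY alpha 1 (f @` (pi @^-1` [set a] `&` K)).
exists (fun n => [set a | ((n.+1%:R)^-1)%:E <= h a])%E; split.
  move=> n; have inv_gt0 : 0 < (n.+1%:R)^-1 :> R by rewrite invr_gt0 ltr0n.
  have inv_le1 : (n.+1%:R)^-1 <= 1 :> R by rewrite invf_le1 ?ltr0n // ler1n.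
  exact (fibre_superlevel_compact dX_metric dW_metric dY_metric alpha_gt0
    K_compact f_cont pi_lip inv_gt0 inv_le1).
rewrite -setgt0_bigcup_ge_invn; apply: eq_set => a; apply/propext.
exact: hausdorff_measure_gt0.
Qed.
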